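(* Let $\beta \in \mathcal{P}$ and $\alpha \in E$ satisfy $\alpha^{q+1} = \beta^q + \beta^{q^2+q+1}$, and let $\lambda \in S$. Then the system of equations $$X^{q+1} + \alpha X + \beta = 0, \qquad X^{q^2+1} = \lambda$$ has at most two solutions in $\mathcal{P}$. (In particular, taking $\lambda = 1$, every line of the cyclic presentation of $PG(3,q)$ meets $\mathcal{O}$ in at most two points, so $\mathcal{O}$ is an ovoid of the cyclic presentation of $PG(3,q)$.)
   Context: Let $q = 2^m$, and let $E = \mathbb{F}_{q^4} \supset K = \mathbb{F}_{q^2} \supset F = \mathbb{F}_q$. Define $\mathcal{P} = \{x \in E \mid x^{q^3+q^2+q+1} = 1\}$, $\mathcal{O} = \{x \in E \mid x^{q^2+1} = 1\}$ and $S = \{x \in K \mid x^{q+1} = 1\}$. The cyclic presentation of $PG(3,q)$ has point set $\mathcal{P}$. Its lines are the sets of zeros in $\mathcal{P}$ of polynomials $X^{q+1} + \alpha X + \beta$, where $\beta \in \mathcal{P}$ and $\alpha \in E$ satisfy $\alpha^{q+1} = \beta^q + \beta^{q^2+q+1}$; each such line has $q+1$ points. An ovoid is a set of $q^2+1$ points meeting every line in at most two points. *)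

From HB Require Import structures.
From mathcomp Require Import all_boot all_order all_algebra all_field.
Set Implicit Arguments. Unset Strict Implicit. Unset Printing Implicit Defensive.
Import GRing.Theory.
Local Open Scope ring_scope.

(* E is a finite field of order q^4, q = 2^m.  The subfield K = F_{q^2} of E
   is the set of fixed points of x |-> x^(q^2). *)

Definition cycP (E : finFieldType) (q : nat) : {set E} :=
  [set x : E | x ^+ (q ^ 3 + q ^ 2 + q + 1) == 1].

Definition cycO (E : finFieldType) (q : nat) : {set E} :=
  [set x : E | x ^+ (q ^ 2 + 1) == 1].

Definition subK (E : finFieldType) (q : nat) : {set E} :=
  [set x : E | x ^+ (q ^ 2) == x].

Definition cycS (E : finFieldType) (q : nat) : {set E} :=
  [set x in subK E q | x ^+ (q + 1) == 1].

From HB Require Import structures.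
From mathcomp Require Import all_boot all_order all_algebra all_field.
From mathcomp Require Import ring zify.
Set Implicit Arguments. Unset Strict Implicit. Unset Printing Implicit Defensive.
Import GRing.Theory.
Local Open Scope ring_scope.

(* Every solution x satisfies x^(q+1) = a x + b (characteristic 2) and
   x^(q^2) x = l.  If a = 0 then x^(q^2+1) = b^(q-1) x^2, so x^2 is determined.
   Otherwise, raising the first equation to the q^2-th power and multiplying by
   x^(q+1) turns it, thanks to (x^(q^2) x)^(q+1) = l^(q+1) = 1, into an equation
   1 + a^(q^2) l x^q + b^(q^2) x^(q+1) = 0 which is linear in x^q; eliminating
   x^q = (a x + b)/x leaves a nonzero quadratic in x.  Either way x is a root of
   a nonzero polynomial of degree at most 2. *)

Lemma card_le2_of_quadratic (R : finIdomainType) (A : {set R}) (a b c : R) :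
  ~~ [&& a == 0, b == 0 & c == 0] ->
  {in A, forall x, a * x ^+ 2 + b * x + c = 0} -> (#|A| <= 2)%N.
Proof.
move=> nz_abc rootA; pose p := Poly [:: c; b; a].
have p_neq0 : p != 0.
  apply: contra nz_abc => /eqP p0; have := coef_Poly [:: c; b; a].
  rewrite -/p p0 => coefp.
  move: (coefp 0%N) (coefp 1%N) (coefp 2%N); rewrite !coef0 /= => <- <- <-.
  by rewrite eqxx.
have rootsA : all (root p) (enum A).
  apply/allP => x; rewrite mem_enum => /rootA px.
  by rewrite /root horner_Poly /= mul0r add0r -px; apply/eqP; ring.
have := max_poly_roots p_neq0 rootsA (enum_uniq A).
by rewrite cardE => /leq_trans/(_ (size_Poly _)).
Qed.

Lemma expr_pchar_nat_trinomial (R : comNzRingType) (n k : nat) (a b x : R) :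
  [pchar R].-nat n ->
  (x ^+ k + a * x + b) ^+ n = (x ^+ n) ^+ k + a ^+ n * x ^+ n + b ^+ n.
Proof. by move=> charn; rewrite !(exprDn_pchar _ _ charn) exprMn exprAC. Qed.

Lemma trinomial_root_pchar2 (R : nzRingType) (k : nat) (a b x : R) :
  2%N \in [pchar R] -> x ^+ k + a * x + b = 0 -> x ^+ k = a * x + b.
Proof.
move=> char2 root_x; apply/eqP.
by rewrite -(oppr_pchar2 char2 (a * x + b)) -addr_eq0 addrA root_x.
Qed.

Section SecantEquations.

Variables (R : comPzRingType) (q : nat) (a b l x : R).
Hypotheses (q_gt0 : (0 < q)%N) (xq1 : x ^+ (q + 1) = a * x + b)
  (xq2 : x ^+ (q ^ 2 + 1) = l).

Lemma secant_quadratic_a0 : a = 0 -> b ^+ (q - 1) * x ^+ 2 - l = 0.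
Proof.
move=> a0; rewrite -xq2.
have -> : (q ^ 2 + 1 = (q + 1) * (q - 1) + 2)%N by nia.
by rewrite exprD exprM xq1 a0 mul0r add0r subrr.
Qed.

Lemma secant_quadratic (a' b' : R) :
  (x ^+ (q ^ 2)) ^+ (q + 1) + a' * x ^+ (q ^ 2) + b' = 0 ->
  l ^+ (q + 1) = 1 ->
  b' * a * x ^+ 2 + (1 + a' * a * l + b' * b) * x + a' * l * b = 0.
Proof.
set y := x ^+ (q ^ 2); set u := x ^+ q => conj_root lq1.
have yx : y * x = l by rewrite -xq2 exprD expr1.
have ux : x ^+ (q + 1) = u * x by rewrite exprD expr1.
have lin_u : 1 + a' * l * u + b' * (u * x) = 0.
  have -> : 1 = y ^+ (q + 1) * (u * x) by rewrite -ux -exprMn yx lq1.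
  rewrite -yx -[RHS](mulr0 (u * x)) -conj_root; ring.
have xq1u : u * x = a * x + b by rewrite -ux.
have -> : b' * a * x ^+ 2 + (1 + a' * a * l + b' * b) * x + a' * l * b
  = x * (1 + a' * l * u + b' * (u * x))
    + (a' * l + b' * x) * (a * x + b - u * x) by ring.
by rewrite lin_u xq1u subrr !mulr0 addr0.
Qed.

End SecantEquations.

Theorem theorem3p2 (m : nat) (E : finFieldType)
  (hE : #|E| = ((2 ^ m) ^ 4)%N)
  (alpha beta lambda : E)
  (hbeta : beta \in cycP E (2 ^ m))
  (halpha : alpha ^+ (2 ^ m + 1) =
            beta ^+ (2 ^ m) + beta ^+ ((2 ^ m) ^ 2 + 2 ^ m + 1))
  (hlambda : lambda \in cycS E (2 ^ m)) :
  (#|[set x in cycP E (2 ^ m) |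
      ((x ^+ (2 ^ m + 1) + alpha * x + beta == 0)
      && (x ^+ ((2 ^ m) ^ 2 + 1) == lambda))%R]| <= 2)%N.
Proof.
have char2 : 2%N \in [pchar E].
  by apply: (@card_finPcharP _ 2 (m * 4)); rewrite // expnM.
have charq2 : [pchar E].-nat ((2 ^ m) ^ 2)%N.
  by rewrite -expnM pnatX (pnatE _ (isT : prime 2)) char2.
set q := (2 ^ m)%N in hbeta hlambda charq2 *.
have q_gt0 : (0 < q)%N by rewrite expn_gt0.
have beta_neq0 : beta != 0.
  by apply: contraTneq hbeta => ->; rewrite inE expr0n addn1 eq_sym oner_eq0.
move: hlambda; rewrite inE => /andP[_ /eqP lambda_q1].
have [alpha0 | alpha_neq0] := eqVneq alpha 0.
  apply: (@card_le2_of_quadratic _ _ (beta ^+ (q - 1)) 0 (- lambda)).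
    by rewrite expf_eq0 (negbTE beta_neq0) andbF.
  move=> x; rewrite !inE => /and3P[_ /eqP root_x /eqP xq2].
  rewrite mul0r addr0; apply: secant_quadratic_a0 xq2 alpha0 => //.
  exact: trinomial_root_pchar2 root_x.
apply: (@card_le2_of_quadratic _ _ (beta ^+ (q ^ 2) * alpha)
  (1 + alpha ^+ (q ^ 2) * alpha * lambda + beta ^+ (q ^ 2) * beta)
  (alpha ^+ (q ^ 2) * lambda * beta)).
  by rewrite mulf_eq0 expf_eq0 (negbTE beta_neq0) (negbTE alpha_neq0) andbF.
move=> x; rewrite !inE => /and3P[_ /eqP root_x /eqP xq2].
apply: (secant_quadratic (trinomial_root_pchar2 char2 root_x) xq2) => //.
have q2_neq0 : (q ^ 2 == 0)%N = false by rewrite expn_eq0 eqn0Ngt q_gt0.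
by rewrite -(expr_pchar_nat_trinomial _ _ _ _ charq2) root_x expr0n q2_neq0.
Qed.
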